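(* Let $U\subseteq L_{\mathrm{up}}$ be a set of up-links such that the sets $P_u$, $u\in U$, are pairwise disjoint, and let $(C,A)$ be a (weakly) connected component of the dependency graph of $U$ (which is an arborescence). If $\ell_1,\ell_2\in C$ satisfy $V_{\ell_1}\cap V_{\ell_2}\neq\emptyset$, then $\ell_1$ and $\ell_2$ have an ancestry relationship in the arborescence $(C,A)$, i.e. $\ell_1$ is an ancestor of $\ell_2$ or $\ell_2$ is an ancestor of $\ell_1$ in $(C,A)$.
   Context: Let $(G=(V,E),L,w)$ be a WTAP instance (spanning tree $G$, links $L\subseteq\binom V2$, weights $w>0$) with a fixed root $r\in V$, and let $F\subseteq L$ be a WTAP solution, i.e. $\bigcup_{\ell\in F}P_\ell=E$, where $P_\ell$ is the edge set of the tree path between the endpoints of $\ell$ and $V_\ell$ its vertex set. Ancestors of $v$ are the vertices on the $r$-$v$ path in $G$ (including $r$ and $v$); descendants are defined reciprocally. $\mathrm{apex}(\ell)$ is the vertex of $V_\ell$ closest to $r$. An up-link is a link $\{t,b\}$ with $t$ an ancestor of $b$; $L_{\mathrm{up}}$ is the set of up-links. For $v\in V$ let $B_v=\{\ell\in F\colon\mathrm{apex}(\ell)\text{ is a descendant of }v\}$. For an up-link $u=\{t,b\}$ with $t$ an ancestor of $b$, let $v_u$ be the ancestor of $t$ farthest from $r$ such that $P_u\subseteq\bigcup_{\ell\in B_{v_u}}P_\ell$, and fix $F_u\subseteq B_{v_u}$ inclusion-wise minimal with $P_u\subseteq\bigcup_{\ell\in F_u}P_\ell$. For $\ell\in F_u$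 let $P_{u,\ell}=P_u\setminus\bigcup_{\bar\ell\in F_u\setminus\{\ell\}}P_{\bar\ell}$; these sets are nonempty, pairwise disjoint, and each is the edge set of a path. Define $\ell_1\prec_u\ell_2$ iff the edges of $P_{u,\ell_1}$ appear before those of $P_{u,\ell_2}$ on the $t$-$b$ path in $G$. If $\ell_1\prec_u\cdots\prec_u\ell_q$ are the links of $F_u$, let $A_u=\{(\ell_i,\ell_{i+1})\colon i=1,\dots,q-1\}$. The dependency graph of $U\subseteq L_{\mathrm{up}}$ is the directed graph with vertex set $F$ whose arc set is the disjoint union of the $A_u$, $u\in U$. When the $P_u$, $u\in U$, are pairwise disjoint, this graph is a branching (no directed cycles, in-degrees at most one), so each weakly connected component is an arborescence. *)

From mathcomp Require Import all_boot.
Set Implicit Arguments. Unset Strict Implicit. Unset Printing Implicit Defensive.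

(* The rooted spanning tree G with root r is given by its parent function
   par : V -> V (par r = r); its edges are {v, par v} for v <> r, and each
   edge is identified with its lower endpoint v (a vertex different from r).
   Links are 2-element vertex sets. *)

Section WTAP.
Variables (V : finType) (par : V -> V) (r : V).

Definition anc (a v : V) : bool := [exists k : 'I_#|V|.+1, iter k par v == a].

Definition depth (v : V) : nat := #|[set a | anc a v]|.-1.

(* P_l : tree edges (lower endpoints) on the path between the endpoints of l:
   edge {e, par e} separates the endpoints iff exactly one of them lies in
   the subtree of e. *)
Definition Pth (l : {set V}) : {set V} :=
  [set e | (e != r) && (#|[set x in l | anc e x]| == 1)].

Definition Vl (l : {set V}) : {set V} :=
  [set x | [exists e in Pth l, (x == e) || (x == par e)]].

Definition is_apex (l : {set V}) (x : V) : bool :=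
  (x \in Vl l) && [forall y in Vl l, depth x <= depth y].

Definition Bset (F : {set {set V}}) (v : V) : {set {set V}} :=
  [set l in F | [exists x, is_apex l x && anc v x]].

Definition covers (S : {set {set V}}) (Q : {set V}) : bool :=
  Q \subset \bigcup_(l in S) Pth l.

Definition is_vu (F : {set {set V}}) (u : {set V}) (t v : V) : bool :=
  [&& anc v t, covers (Bset F v) (Pth u) &
      [forall w, (anc w t && covers (Bset F w) (Pth u)) ==> (depth w <= depth v)]].

Definition Fu_spec (F : {set {set V}}) (u : {set V}) (t : V) (S : {set {set V}}) : bool :=
  [&& [exists v, is_vu F u t v && (S \subset Bset F v)],
      covers S (Pth u) &
      [forall S' : {set {set V}}, (S' \proper S) ==> ~~ covers S' (Pth u)]].

Definition Pul (u : {set V}) (S : {set {set V}}) (l : {set V}) : {set V} :=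
  Pth u :\: \bigcup_(l' in S :\ l) Pth l'.

(* l1 <_u l2 : edges of P_{u,l1} come before those of P_{u,l2} on the t-b
   path (the t-b path goes downward from t, so "before" = smaller depth) *)
Definition precu (u : {set V}) (S : {set {set V}}) (l1 l2 : {set V}) : bool :=
  [forall e1 in Pul u S l1, forall e2 in Pul u S l2, depth e1 < depth e2].

Definition arcu (u : {set V}) (S : {set {set V}}) (l1 l2 : {set V}) : bool :=
  [&& l1 \in S, l2 \in S, precu u S l1 l2 &
      [forall l3 in S, ~~ (precu u S l1 l3 && precu u S l3 l2)]].

Definition dep_arc (U : {set {set V}}) (Fu : {set V} -> {set {set V}})
  : rel {set V} := fun l1 l2 => [exists u in U, arcu u (Fu u) l1 l2].

Definition dep_sym (U : {set {set V}}) (Fu : {set V} -> {set {set V}})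
  : rel {set V} := fun l1 l2 => dep_arc U Fu l1 l2 || dep_arc U Fu l2 l1.

End WTAP.

From Pilot Require Import Defs.
From mathcomp Require Import all_boot.
Set Implicit Arguments. Unset Strict Implicit. Unset Printing Implicit Defensive.

(* Every arc [p -> q] of the dependency graph of [U] puts [apex q] on [P_u] and on
   [P_p], strictly below [apex p].  As [apex q] lies on the path of a single up-link,
   each link has at most one in-arc, so a weak component is the set of descendants of
   a root.  For [l1], [l2] in it sharing a vertex, with [apex l1] above [apex l2], the
   in-neighbour [p] of [l2] shares the vertex [apex l2] with [l1]; induction on the
   depths of the apices makes [l1] and [p] comparable.  The only bad case is that [p]
   reaches [l1] through another out-neighbour [q'].  If [(p, l2)] is an arc of [A_u]
   with [u = {t, b}], then [apex q'] is an ancestor of [t] and the links with apex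
   below [apex q'] cover [P_u], while [apex q'] is deeper than [apex p], hence than
   [v_u]: this contradicts the choice of [v_u]. *)

Lemma connect_last_arc (T : finType) (e : rel T) x y :
  connect e x y -> x != y -> exists2 z, connect e x z & e z y.
Proof.
case/connectP => p; elim/last_ind: p => [|p z _] /=; first by move=> _ ->; rewrite eqxx.
rewrite rcons_path last_rcons => /andP[xp pz] -> _.
by exists (last x p) => //; apply/connectP; exists p.
Qed.

Lemma connect_first_arc (T : finType) (e : rel T) x y :
  connect e x y -> x != y -> exists2 z, e x z & connect e z y.
Proof.
case/connectP => [[|z p]] /=; first by move=> _ ->; rewrite eqxx.
by case/andP => xz zp -> _; exists z => //; apply/connectP; exists p.
Qed.

Section Tree.
Variables (V : finType) (par : V -> V) (r : V).
Hypothesis par_r : par r = r.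
Hypothesis iter_par_card : forall v, iter #|V| par v = r.

Local Notation anc := (anc par).
Local Notation depth := (depth par).
Local Notation Pth := (Pth par r).
Local Notation Vl := (Vl par r).
Local Notation is_apex := (is_apex par r).

Lemma iter_par_r k : iter k par r = r.
Proof. by elim: k => //= k ->. Qed.

Lemma ancP a v : reflect (exists k, iter k par v = a) (anc a v).
Proof.
apply: (iffP existsP) => [[k /eqP <-]|[k <-]]; first by exists k.
have [le_k|lt_k] := leqP k #|V|; first by exists (Ordinal (leq_ltn_trans le_k (ltnSn _))).
exists ord_max; apply/eqP => /=.
by rewrite iter_par_card -(subnK (ltnW lt_k)) iterD iter_par_card iter_par_r.
Qed.

Lemma anc_refl v : anc v v.
Proof. by apply/ancP; exists 0. Qed.

Lemma anc_par v : anc (par v) v.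
Proof. by apply/ancP; exists 1. Qed.

Lemma anc_root v : anc r v.
Proof. by apply/ancP; exists #|V|. Qed.

Lemma anc_trans a b c : anc a b -> anc b c -> anc a c.
Proof. by move=> /ancP[k <-] /ancP[m <-]; apply/ancP; exists (k + m); rewrite iterD. Qed.

Lemma anc_total a a' v : anc a v -> anc a' v -> anc a a' || anc a' a.
Proof.
move=> /ancP[k <-] /ancP[m <-]; apply/orP.
have [le_km|lt_mk] := leqP k m.
  by right; apply/ancP; exists (m - k); rewrite -iterD subnK.
by left; apply/ancP; exists (k - m); rewrite -iterD subnK // ltnW.
Qed.

(* On a [par]-cycle through [v], an iterate [iter (n * period) par v = v] is taken
   past [#|V|] steps, hence equals [r]. *)
Lemma anc_antisym a v : anc a v -> anc v a -> a = v.
Proof.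
move=> /ancP[[|k] <-] // /ancP[m]; rewrite -iterD => cyc.
have iter_cyc n : iter (n * (m + k.+1)) par v = v.
  by elim: n => //= n IH; rewrite mulSn iterD IH cyc.
have le_card : #|V| <= #|V| * (m + k.+1) by rewrite leq_pmulr // addnS.
have v_r : v = r by rewrite -(iter_cyc #|V|) -(subnK le_card) iterD iter_par_card iter_par_r.
by rewrite v_r iter_par_r.
Qed.

Definition sanc a v := anc a v && (a != v).

Lemma sanc_anc a v : sanc a v -> anc a v.
Proof. by case/andP. Qed.

Lemma sanc_not_anc a v : sanc a v -> ~~ anc v a.
Proof. by case/andP=> av ne; apply: contra ne => va; rewrite (anc_antisym av va). Qed.

Lemma sanc_anc_trans a b c : sanc a b -> anc b c -> sanc a c.
Proof.
case/andP=> ab ne bc; rewrite /sanc (anc_trans ab bc); apply: contraNneq ne => ac.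
by apply/eqP/(anc_antisym ab); rewrite ac.
Qed.

Lemma anc_cases a b v : anc a v -> anc b v -> anc a b \/ sanc b a.
Proof.
move=> av bv; have [ab|nab] := boolP (anc a b); first by left.
right; have := anc_total av bv; rewrite (negbTE nab) /= => ba.
by rewrite /sanc ba; apply: contraNneq nab => ->; apply: anc_refl.
Qed.

Lemma depthE v : depth v = #|[set x | sanc x v]|.
Proof.
rewrite /Defs.depth (cardsD1 v) inE anc_refl add1n /=.
by apply: eq_card => x; rewrite !inE andbC.
Qed.

Lemma anc_depth a v : anc a v -> depth a <= depth v.
Proof.
move=> av; rewrite !depthE subset_leq_card //.
by apply/subsetP => x; rewrite !inE => /sanc_anc_trans; apply.
Qed.

Lemma sanc_depth a v : sanc a v -> depth a < depth v.
Proof.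
move=> av; rewrite !depthE proper_card //; apply/properP; split.
  by apply/subsetP => x; rewrite !inE => /sanc_anc_trans; apply; apply: sanc_anc.
by exists a; rewrite !inE // /sanc eqxx andbF.
Qed.

Lemma sanc_anc_par a e : sanc a e -> anc a (par e).
Proof.
case/andP=> /ancP[[|k] <-] ne; first by rewrite eqxx in ne.
by apply/ancP; exists k; rewrite -iterSr.
Qed.

Lemma sanc_child c x : sanc c x -> exists e, [/\ par e = c, anc e x & e != c].
Proof.
case/andP=> /ancP[k <-]; elim: k => [|k IH] ne; first by rewrite eqxx in ne.
have [eq_k|ne_k] := eqVneq (iter k par x) (iter k.+1 par x).
  by rewrite -eq_k; apply: IH; rewrite eq_k.
by exists (iter k par x); split => //; apply/ancP; exists k.
Qed.

Definition is_lca x y c := [/\ anc c x, anc c y & forall w, anc w x -> anc w y -> anc w c].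

Lemma lca_exists x y : exists c, is_lca x y c.
Proof.
have rxy : anc r x && anc r y by rewrite !anc_root.
case: (@arg_maxnP _ r (fun w => anc w x && anc w y) depth rxy) => c /andP[cx cy] c_max.
exists c; split => // w wx wy; case: (anc_cases wx cx) => // /sanc_depth.
by rewrite ltnNge [_ <= _]c_max ?wx.
Qed.

Lemma Pth_pair x y e : x != y -> (e \in Pth [set x; y]) = (anc e x != anc e y).
Proof.
move=> xy; rewrite /Defs.Pth inE (cardsD1 x) (cardsD1 y) !inE !eqxx orbT /= (eq_sym y x) xy.
have -> : [set z in [set x; y] | anc e z] :\ x :\ y = set0.
  by apply/setP => z; rewrite !inE; case: (z == x); case: (z == y); rewrite ?andbF.
have [->|_] := eqVneq e r; first by rewrite !anc_root.
by rewrite cards0; case: (anc e x); case: (anc e y).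
Qed.

Lemma Pth_pairE x y c e : x != y -> is_lca x y c ->
  (e \in Pth [set x; y]) = sanc c e && (anc e x || anc e y).
Proof.
move=> xy [cx cy c_max]; rewrite Pth_pair //.
have sanc_c z z' : anc c z -> anc c z' -> anc e z -> ~~ anc e z' -> sanc c e.
  move=> cz cz' ez ez'; have [ce|/sanc_anc ec] := anc_cases cz ez.
    by rewrite /sanc ce; apply: contraNneq ez' => <-.
  by rewrite (anc_trans ec cz') in ez'.
case ex: (anc e x); case ey: (anc e y) => /=; rewrite ?andbT ?andbF //.
- by apply/esym/negP => /sanc_not_anc; rewrite c_max.
- by rewrite (sanc_c x y) ?ey.
- by rewrite (sanc_c y x) ?ex.
Qed.

Lemma Vl_pairE x y c z : x != y -> is_lca x y c ->
  (z \in Vl [set x; y]) = anc c z && (anc z x || anc z y).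
Proof.
move=> xy L; have [cx cy _] := L; rewrite /Defs.Vl inE; apply/exists_inP/idP.
  case=> e; rewrite (Pth_pairE _ xy L) => /andP[ce exy] /orP[/eqP->|/eqP->].
    by rewrite sanc_anc.
  rewrite sanc_anc_par //=.
  by case/orP: exy => /(anc_trans (anc_par e)) ->; rewrite ?orbT.
case/andP=> cz zxy; have [zc|nzc] := eqVneq z c; last first.
  by exists z; rewrite ?eqxx // (Pth_pairE _ xy L) /sanc cz eq_sym nzc.
have : sanc c x || sanc c y.
  by rewrite /sanc cx cy -negb_and; apply: contra xy => /andP[/eqP <- /eqP <-].
case/orP => /sanc_child[e [pe ew ne]]; exists e; rewrite ?zc -?pe ?eqxx ?orbT //;
  by rewrite (Pth_pairE _ xy L) /sanc -pe anc_par eq_sym pe ne ew ?orbT.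
Qed.

Lemma is_apex_pairE x y c z : x != y -> is_lca x y c -> is_apex [set x; y] z = (z == c).
Proof.
move=> xy L; have [cx cy _] := L; rewrite /Defs.is_apex (Vl_pairE _ xy L).
have [->|nzc] := eqVneq z c.
  rewrite anc_refl cx /=; apply/forall_inP => w.
  by rewrite (Vl_pairE _ xy L) => /andP[/anc_depth].
apply/negP => /andP[/andP[cz _] /forall_inP/(_ c)].
rewrite (Vl_pairE _ xy L) anc_refl cx => /(_ isT).
by rewrite leqNgt sanc_depth // /sanc cz eq_sym.
Qed.

Definition apex (l : {set V}) : V := odflt r [pick x | is_apex l x].

Lemma apex_pair x y c : x != y -> is_lca x y c -> apex [set x; y] = c.
Proof.
move=> xy L; rewrite /apex; case: pickP => [z|no_apex] /=.
  by rewrite (is_apex_pairE _ xy L) => /eqP.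
by have := no_apex c; rewrite (is_apex_pairE _ xy L) eqxx.
Qed.

Lemma linkP (l : {set V}) : #|l| = 2 ->
  exists x y, [/\ x != y, l = [set x; y] & is_lca x y (apex l)].
Proof.
move/eqP/cards2P => [x [y [xy ->]]]; have [c L] := lca_exists x y.
by exists x, y; rewrite (apex_pair xy L).
Qed.

Lemma Pth_sub_Vl l e : e \in Pth l -> e \in Vl l.
Proof. by move=> el; rewrite /Defs.Vl inE; apply/exists_inP; exists e; rewrite ?eqxx. Qed.

Section Link.
Variables (l : {set V}) (card_l : #|l| = 2).

Lemma is_apexE z : is_apex l z = (z == apex l).
Proof. by have [x [y [xy -> L]]] := linkP card_l; apply: is_apex_pairE. Qed.

Lemma sanc_apex_Pth e : e \in Pth l -> sanc (apex l) e.
Proof. by have [x [y [xy -> L]]] := linkP card_l; rewrite (Pth_pairE _ xy L) => /andP[]. Qed.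

Lemma anc_apex_Vl z : z \in Vl l -> anc (apex l) z.
Proof. by have [x [y [xy -> L]]] := linkP card_l; rewrite (Vl_pairE _ xy L) => /andP[]. Qed.

Lemma Pth_above_Vl f z : sanc (apex l) f -> anc f z -> z \in Vl l -> f \in Pth l.
Proof.
have [x [y [xy -> L]]] := linkP card_l; rewrite (Pth_pairE _ xy L) (Vl_pairE _ xy L).
by move=> -> fz /andP[_ /orP[] /(anc_trans fz) ->]; rewrite ?orbT.
Qed.

Lemma Pth_up_closed f e : sanc (apex l) f -> anc f e -> e \in Pth l -> f \in Pth l.
Proof. by move=> af fe /Pth_sub_Vl; apply: Pth_above_Vl. Qed.

Lemma Pth_convex e1 e2 f : e1 \in Pth l -> e2 \in Pth l -> anc e1 f -> anc f e2 -> f \in Pth l.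
Proof.
by move=> /sanc_apex_Pth ae1 e2l /(sanc_anc_trans ae1) af fe2; apply: Pth_up_closed af fe2 e2l.
Qed.

Lemma Vl_up_closed y z : anc (apex l) y -> anc y z -> z \in Vl l -> y \in Vl l.
Proof.
have [x' [y' [xy -> L]]] := linkP card_l; rewrite !(Vl_pairE _ xy L) => -> yz.
by case/andP=> _ /orP[] /(anc_trans yz) ->; rewrite ?orbT.
Qed.

End Link.

Lemma in_Bset F v (l : {set V}) : #|l| = 2 ->
  (l \in Bset par r F v) = (l \in F) && anc v (apex l).
Proof.
move=> card_l; rewrite inE; congr (_ && _); apply/existsP/idP => [[x]|vl].
  by rewrite is_apexE // => /andP[/eqP->].
by exists (apex l); rewrite is_apexE // eqxx.
Qed.

Lemma Pth_uplink t b e : t != b -> anc t b ->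
  (e \in Pth [set t; b]) = anc e b && ~~ anc e t.
Proof.
move=> tb anc_tb; rewrite Pth_pair //.
by case et: (anc e t); rewrite ?(anc_trans et anc_tb) //; case: (anc e b).
Qed.

Section MinimalCover.
Variables (u : {set V}) (t b : V) (S : {set {set V}}).
Hypotheses (tb : t != b) (anc_tb : anc t b) (u_tb : u = [set t; b]).
Hypothesis card_S : forall l, l \in S -> #|l| = 2.
Hypothesis S_covers : covers par r S (Pth u).
Hypothesis S_min : forall S' : {set {set V}}, S' \proper S -> ~~ covers par r S' (Pth u).

Local Notation Pul := (Pul par r u S).
Local Notation precu := (precu par r u S).
Local Notation arcu := (arcu par r u S).

Lemma Pth_u e : (e \in Pth u) = anc e b && ~~ anc e t.
Proof. by rewrite u_tb Pth_uplink. Qed.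

Lemma Pul_Pthu l g : g \in Pul l -> g \in Pth u.
Proof. by rewrite inE => /andP[]. Qed.

Lemma Pul_notin_Pth l l' g : g \in Pul l -> l' \in S -> l' != l -> g \notin Pth l'.
Proof.
rewrite inE => /andP[/bigcupP not_covered _] l'S l'l; apply/negP => gl'.
by apply: not_covered; exists l'; rewrite // !inE l'l.
Qed.

Lemma Pul_Pth l g : g \in Pul l -> g \in Pth l.
Proof.
move=> gl; have /bigcupP[l' l'S gl'] := subsetP S_covers g (Pul_Pthu gl).
by have [<-//|l'l] := eqVneq l' l; rewrite (negbTE (Pul_notin_Pth gl l'S l'l)) in gl'.
Qed.

Lemma Pul_nonempty l : l \in S -> exists g, g \in Pul l.
Proof.
move=> lS; have /subsetPn[g gu not_covered] := S_min (properD1 lS).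
by exists g; rewrite inE gu andbT.
Qed.

Lemma Pthu_cases e f : e \in Pth u -> f \in Pth u -> anc e f \/ sanc f e.
Proof. by rewrite !Pth_u => /andP[eb _] /andP[fb _]; apply: anc_cases eb fb. Qed.

Lemma Pthu_depth_anc e f : e \in Pth u -> f \in Pth u -> depth e <= depth f -> anc e f.
Proof.
move=> eu fu le_ef; have [//|/sanc_depth] := Pthu_cases eu fu.
by rewrite ltnNge le_ef.
Qed.

Lemma precuP l1 l2 :
  reflect (forall e1 e2, e1 \in Pul l1 -> e2 \in Pul l2 -> depth e1 < depth e2)
          (precu l1 l2).
Proof.
apply: (iffP forall_inP) => [prec e1 e2 /prec/forall_inP|prec e1 e1l]; first exact.
by apply/forall_inP => e2; apply: prec.
Qed.

Lemma precu_sanc l1 l2 e1 e2 : precu l1 l2 -> e1 \in Pul l1 -> e2 \in Pul l2 -> sanc e1 e2.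
Proof.
move=> /precuP prec e1l e2l; have lt12 := prec _ _ e1l e2l.
have [e12|/sanc_depth] := Pthu_cases (Pul_Pthu e1l) (Pul_Pthu e2l); last first.
  by rewrite ltnNge ltnW.
by rewrite /sanc e12; apply: contraTneq lt12 => ->; rewrite ltnn.
Qed.

Lemma precu_neq l1 l2 : l1 \in S -> precu l1 l2 -> l1 != l2.
Proof.
move=> l1S prec; apply: contraTneq prec => <-; apply/negP => /precuP prec.
by have [g gl] := Pul_nonempty l1S; have := prec g g gl gl; rewrite ltnn.
Qed.

Lemma precu_total l1 l2 : l1 \in S -> l2 \in S -> l1 != l2 -> precu l1 l2 || precu l2 l1.
Proof.
have prec_of l l' f f' : l \in S -> l' \in S -> l != l' ->
    f \in Pul l -> f' \in Pul l' -> sanc f f' -> precu l l'.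
  move=> lS l'S ll' fl f'l ff'; apply/precuP => e e' el e'l; rewrite ltnNge.
  apply/negP => /(Pthu_depth_anc (Pul_Pthu e'l) (Pul_Pthu el)) e'e.
  have [fe'|/sanc_anc e'f] := Pthu_cases (Pul_Pthu fl) (Pul_Pthu e'l).
    have := Pth_convex (card_S lS) (Pul_Pth fl) (Pul_Pth el) fe' e'e.
    by apply/negP; apply: Pul_notin_Pth e'l lS ll'.
  have := Pth_convex (card_S l'S) (Pul_Pth e'l) (Pul_Pth f'l) e'f (sanc_anc ff').
  by rewrite (negbTE (Pul_notin_Pth fl l'S _)) // eq_sym.
move=> l1S l2S l12; have [f1 f1l] := Pul_nonempty l1S; have [f2 f2l] := Pul_nonempty l2S.
have f12 : f1 != f2.
  by apply: contraTneq (Pul_Pth f2l) => <-; rewrite (Pul_notin_Pth f1l l2S) // eq_sym.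
have [a12|s21] := Pthu_cases (Pul_Pthu f1l) (Pul_Pthu f2l).
  by rewrite (prec_of l1 l2 f1 f2) // /sanc a12 f12.
by rewrite (prec_of l2 l1 f2 f1) ?orbT // eq_sym.
Qed.

Lemma arcuP l1 l2 : arcu l1 l2 ->
  [/\ l1 \in S, l2 \in S, precu l1 l2 & forall l, l \in S -> ~~ (precu l1 l && precu l l2)].
Proof. by case/and4P => l1S l2S prec /forall_inP. Qed.

Lemma arcu_succ_uniq {l l1 l2} : arcu l l1 -> arcu l l2 -> l1 = l2.
Proof.
case/arcuP=> _ l1S prec1 between1 /arcuP[_ l2S prec2 between2].
apply/eqP/negPn/negP => /(precu_total l1S l2S)/orP[prec12|prec21].
  by have := between2 l1 l1S; rewrite prec1 prec12.
by have := between1 l2 l2S; rewrite prec2 prec21.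
Qed.

Lemma arcu_pred_uniq {l1 l2 l} : arcu l1 l -> arcu l2 l -> l1 = l2.
Proof.
case/arcuP=> l1S _ prec1 between1 /arcuP[l2S _ prec2 between2].
apply/eqP/negPn/negP => /(precu_total l1S l2S)/orP[prec12|prec21].
  by have := between1 l2 l2S; rewrite prec12 prec2.
by have := between2 l1 l1S; rewrite prec21 prec1.
Qed.

Lemma precu_anc_apex l1 l2 e : l1 \in S -> l2 \in S -> precu l1 l2 ->
  e \in Pul l1 -> anc e (apex l2).
Proof.
move=> l1S l2S prec el1; have [g gl2] := Pul_nonempty l2S.
have eg := precu_sanc prec el1 gl2.
have ag := sanc_apex_Pth (card_S l2S) (Pul_Pth gl2).
have [//|ae] := anc_cases (sanc_anc eg) (sanc_anc ag).
have := Pth_up_closed (card_S l2S) ae (sanc_anc eg) (Pul_Pth gl2).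
by rewrite (negbTE (Pul_notin_Pth el1 l2S _)) // eq_sym (precu_neq l1S prec).
Qed.

Lemma arcu_apex_Pthu {l1 l2} : arcu l1 l2 -> apex l2 \in Pth u.
Proof.
case/arcuP=> l1S l2S prec _; have [e el1] := Pul_nonempty l1S.
have [g gl2] := Pul_nonempty l2S.
have ea := precu_anc_apex l1S l2S prec el1.
have ag := sanc_anc (sanc_apex_Pth (card_S l2S) (Pul_Pth gl2)).
move: (Pul_Pthu el1) (Pul_Pthu gl2); rewrite !Pth_u => /andP[_ et] /andP[gb _].
by rewrite (anc_trans ag gb); apply: contra et; apply: anc_trans ea.
Qed.

(* Otherwise the link of [S] covering [apex l2] would lie strictly between [l1] and [l2]. *)
Lemma arcu_apex_Pth {l1 l2} : arcu l1 l2 -> apex l2 \in Pth l1.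
Proof.
move=> arc12; have apex_u := arcu_apex_Pthu arc12.
case/arcuP: arc12 => l1S l2S prec12 no_between.
apply: contraT => apex_notin_l1.
have /bigcupP[l lS apex_l] := subsetP S_covers _ apex_u.
have l_l2 : l != l2.
  apply: contraTneq apex_l => ->; apply/negP => /(sanc_apex_Pth (card_S l2S)).
  by rewrite /sanc eqxx andbF.
have l_l1 : l != l1 by apply: contraNneq apex_notin_l1 => <-.
have /negP[] := no_between l lS; apply/andP; split; apply/precuP.
  move=> f h fl1 hl; rewrite ltnNge; apply/negP.
  move=> /(Pthu_depth_anc (Pul_Pthu hl) (Pul_Pthu fl1)) hf.
  have := Pth_convex (card_S lS) (Pul_Pth hl) apex_l hf (precu_anc_apex l1S l2S prec12 fl1).
  by rewrite (negbTE (Pul_notin_Pth fl1 lS l_l1)).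
move=> h g hl gl2; rewrite ltnNge; apply/negP.
move=> /(Pthu_depth_anc (Pul_Pthu gl2) (Pul_Pthu hl)) gh.
have apex_g := sanc_anc (sanc_apex_Pth (card_S l2S) (Pul_Pth gl2)).
have := Pth_convex (card_S lS) apex_l (Pul_Pth hl) apex_g gh.
by rewrite (negbTE (Pul_notin_Pth gl2 lS l_l2)).
Qed.

End MinimalCover.

Section DependencyGraph.
Variables (F U : {set {set V}}) (Fu : {set V} -> {set {set V}}).
Hypothesis card_F : forall l, l \in F -> #|l| = 2.
Hypothesis U_spec : forall u, u \in U -> exists t b,
  [/\ u = [set t; b], t != b, anc t b & Fu_spec par r F u t (Fu u)].
Hypothesis U_disjoint : forall u1 u2, u1 \in U -> u2 \in U -> u1 != u2 ->
  [disjoint Pth u1 & Pth u2].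

Local Notation arc := (dep_arc par r U Fu).
Local Notation Bset := (Bset par r F).
Local Notation covers := (covers par r).

Lemma Pth_U_inj u1 u2 e : u1 \in U -> u2 \in U -> e \in Pth u1 -> e \in Pth u2 -> u1 = u2.
Proof.
move=> u1U u2U e1 e2; have [//|u12] := eqVneq u1 u2.
by rewrite (disjointFr (U_disjoint u1U u2U u12) e1) in e2.
Qed.

Lemma uplinkP u : u \in U -> exists t b v, [/\ u = [set t; b], t != b, anc t b &
  [/\ is_vu par r F u t v, Fu u \subset Bset v, covers (Fu u) (Pth u)
    & forall S' : {set {set V}}, S' \proper Fu u -> ~~ covers S' (Pth u)]].
Proof.
case/U_spec=> t [b [u_tb tb anc_tb /and3P[/exists_inP[v vu Fu_B] Fu_cov /forallP Fu_min]]].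
by exists t, b, v; split => //; split => // S'; apply/implyP.
Qed.

Lemma Fu_sub_F u l : u \in U -> l \in Fu u -> l \in F.
Proof.
by case/uplinkP=> t [b [v [_ _ _ [_ /subsetP Fu_B _ _]]]] /Fu_B; rewrite inE => /andP[].
Qed.

Lemma card_Fu u : u \in U -> forall l, l \in Fu u -> #|l| = 2.
Proof. by move=> uU l /(Fu_sub_F uU)/card_F. Qed.

Lemma arcP p q : reflect (exists2 u, u \in U & arcu par r u (Fu u) p q) (arc p q).
Proof. exact: exists_inP. Qed.

Lemma arc_F p q : arc p q -> p \in F /\ q \in F.
Proof. by case/arcP=> u uU /and4P[pu qu _ _]; split; apply: Fu_sub_F uU _. Qed.

Lemma arc_apex p q : arc p q -> exists2 u, u \in U &
  [/\ arcu par r u (Fu u) p q, apex q \in Pth u & apex q \in Pth p].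
Proof.
case/arcP=> u uU arc_u; exists u => //.
have [t [b [v [u_tb tb anc_tb [_ _ Fu_cov Fu_min]]]]] := uplinkP uU.
split=> //; first exact: (arcu_apex_Pthu tb anc_tb u_tb (card_Fu uU) Fu_cov Fu_min arc_u).
exact: (arcu_apex_Pth tb anc_tb u_tb (card_Fu uU) Fu_cov Fu_min arc_u).
Qed.

Lemma arc_sanc_apex p q : arc p q -> sanc (apex p) (apex q).
Proof.
move=> arc_pq; have [pF _] := arc_F arc_pq; have [u _ [_ _ q_p]] := arc_apex arc_pq.
exact: (sanc_apex_Pth (card_F pF) q_p).
Qed.

Lemma connect_anc_apex x y : connect arc x y -> anc (apex x) (apex y).
Proof.
case/connectP=> s; elim: s x => [|z s IH] x /=; first by move=> _ ->; apply: anc_refl.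
by case/andP=> /arc_sanc_apex/sanc_anc xz zs y_last; apply: anc_trans xz (IH z zs y_last).
Qed.

(* Arcs into [q] come from the unique up-link whose path contains [apex q]. *)
Lemma arc_pred_uniq p p' q : arc p q -> arc p' q -> p = p'.
Proof.
move=> /arc_apex[u uU [arc_u q_u _]] /arc_apex[u' u'U [arc_u' q_u' _]].
move: arc_u'; rewrite -(Pth_U_inj uU u'U q_u q_u') => arc_u'.
have [t [b [v [u_tb tb anc_tb [_ _ Fu_cov Fu_min]]]]] := uplinkP uU.
exact: (arcu_pred_uniq tb anc_tb u_tb (card_Fu uU) Fu_cov Fu_min arc_u arc_u').
Qed.

Lemma arc_root_exists x : exists2 rho, connect arc rho x & forall z, ~~ arc z rho.
Proof.
case: (@arg_minnP _ x (fun z => connect arc z x) (fun z => depth (apex z)) (connect0 _ _)).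
move=> rho rho_x rho_min; exists rho => // z; apply/negP => arc_z.
have := rho_min z (connect_trans (connect1 arc_z) rho_x).
by rewrite leqNgt sanc_depth // arc_sanc_apex.
Qed.

Lemma connect_root_sym rho x y : (forall z, ~~ arc z rho) -> connect arc rho x ->
  connect (dep_sym par r U Fu) x y -> connect arc rho y.
Proof.
move=> rho_root rho_x /connectP[s]; elim: s x rho_x => [|z s IH] x rho_x /=.
  by move=> _ ->.
case/andP=> /orP[arc_xz|arc_zx] zs y_last; apply: IH zs y_last.
  exact: connect_trans rho_x (connect1 arc_xz).
have [rho_eq|rho_x'] := eqVneq rho x; first by move: (rho_root z); rewrite rho_eq arc_zx.
have [w rho_w arc_wx] := connect_last_arc rho_x rho_x'.
by rewrite (arc_pred_uniq arc_zx arc_wx).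
Qed.

Lemma subtree_covered q y z f : q \in F -> connect arc q y -> z \in Vl y ->
  sanc (apex q) f -> anc f z -> f \in \bigcup_(l in Bset (apex q)) Pth l.
Proof.
move=> qF /connectP[s]; elim/last_ind: s y z f => [|s w IH] y z f /=.
  move=> _ -> zq qf fz; apply/bigcupP; exists q.
    by rewrite in_Bset ?card_F // qF anc_refl.
  exact: (Pth_above_Vl (card_F qF) qf fz zq).
rewrite rcons_path last_rcons => /andP[qs arc_w] -> zw qf fz.
have [_ wF] := arc_F arc_w; have [u _ [_ _ w_s]] := arc_apex arc_w.
have [f_w|w_f] := anc_cases fz (anc_apex_Vl (card_F wF) zw).
  exact: (IH _ _ _ qs erefl (Pth_sub_Vl w_s) qf f_w).
apply/bigcupP; exists w; last exact: (Pth_above_Vl (card_F wF) w_f fz zw).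
rewrite in_Bset ?card_F // wF connect_anc_apex //.
by apply: connect_trans (connect1 arc_w); apply/connectP; exists s.
Qed.

Lemma uplink_covered_below u t b p q x y :
  u \in U -> u = [set t; b] -> t != b -> anc t b -> arcu par r u (Fu u) p q ->
  x \in F -> connect arc x y -> anc (apex y) (apex q) -> apex q \in Vl y ->
  anc (apex x) t -> covers (Bset (apex x)) (Pth u).
Proof.
(* Edges of [P_u] above [apex q] are covered by [subtree_covered]; an edge below it
   is covered by its link in [Fu u] if that link's apex is below [apex x], and
   otherwise lies on [P_q]. *)
move=> uU u_tb tb anc_tb arc_pq xF xy yq q_y xt.
have [_ [_ [_ [_ _ _ [_ _ Fu_cov Fu_min]]]]] := uplinkP uU.
have [_ qFu _ _] := arcuP arc_pq; have qF := Fu_sub_F uU qFu.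
have q_u := arcu_apex_Pthu tb anc_tb u_tb (card_Fu uU) Fu_cov Fu_min arc_pq.
have xq := anc_trans (connect_anc_apex xy) yq.
apply/subsetP => e e_u; have := e_u; rewrite (Pth_u tb anc_tb u_tb) => /andP[_ et].
have [e_q|q_e] := Pthu_cases tb anc_tb u_tb e_u q_u.
  have [xe|/sanc_anc ex] := anc_cases xq e_q; last by rewrite (anc_trans ex xt) in et.
  have x_e : sanc (apex x) e by rewrite /sanc xe; apply: contraNneq et => <-.
  exact: (subtree_covered xF xy q_y x_e e_q).
have /bigcupP[l lFu e_l] := subsetP Fu_cov e e_u; have lF := Fu_sub_F uU lFu.
have [xl|l_x] := anc_cases (anc_trans xq (sanc_anc q_e))
                           (sanc_anc (sanc_apex_Pth (card_F lF) e_l)).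
  by apply/bigcupP; exists l; rewrite // in_Bset ?card_F // lF xl.
have [g g_q] := Pul_nonempty Fu_min qFu.
have q_g := sanc_apex_Pth (card_F qF) (Pul_Pth Fu_cov g_q).
have [e_g|g_e] := Pthu_cases tb anc_tb u_tb e_u (Pul_Pthu g_q).
  apply/bigcupP; exists q; first by rewrite in_Bset ?card_F // qF xq.
  exact: (Pth_up_closed (card_F qF) q_e e_g (Pul_Pth Fu_cov g_q)).
have l_q : l != q by apply: contraTneq xq => lq; rewrite -lq; apply: sanc_not_anc l_x.
have l_g : sanc (apex l) g := sanc_anc_trans l_x (anc_trans xq (sanc_anc q_g)).
have := Pth_up_closed (card_F lF) l_g (sanc_anc g_e) e_l.
by rewrite (negbTE (Pul_notin_Pth g_q lFu l_q)).
Qed.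

(* [apex x] is a candidate for [v_u], whose maximality bounds its depth. *)
Lemma depth_apex_le_source u p q x y : u \in U -> arcu par r u (Fu u) p q ->
  x \in F -> connect arc x y -> anc (apex y) (apex q) -> apex q \in Vl y ->
  apex x \notin Pth u -> depth (apex x) <= depth (apex p).
Proof.
move=> uU arc_pq xF xy yq q_y x_u.
have [t [b [v [u_tb tb anc_tb [vu Fu_B Fu_cov Fu_min]]]]] := uplinkP uU.
have [pFu _ _ _] := arcuP arc_pq.
have xt : anc (apex x) t.
  have := arcu_apex_Pthu tb anc_tb u_tb (card_Fu uU) Fu_cov Fu_min arc_pq.
  rewrite (Pth_u tb anc_tb u_tb) => /andP[qb _].
  have xb := anc_trans (anc_trans (connect_anc_apex xy) yq) qb.
  by move: x_u; rewrite (Pth_u tb anc_tb u_tb) xb negbK.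
have cov := uplink_covered_below uU u_tb tb anc_tb arc_pq xF xy yq q_y xt.
case/and3P: vu => _ _ /forallP/(_ (apex x))/implyP; rewrite xt cov => /(_ isT) x_v.
apply: leq_trans x_v (anc_depth _).
by move/subsetP/(_ p pFu): Fu_B; rewrite in_Bset ?(card_Fu uU) // => /andP[].
Qed.

Lemma sibling_subtree_avoids_apex p q q' y : arc p q -> arc p q' -> q != q' ->
  connect arc q' y -> anc (apex y) (apex q) -> apex q \notin Vl y.
Proof.
move=> arc_pq arc_pq' qq' q'y yq; apply/negP => q_y.
have [u uU [arc_u _ _]] := arc_apex arc_pq.
have [u' u'U [arc_u' q'_u' q'_p]] := arc_apex arc_pq'.
have [uu'|uu'] := eqVneq u u'.
  move: arc_u'; rewrite -uu' => arc_u'.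
  have [t [b [v [u_tb tb anc_tb [_ _ Fu_cov Fu_min]]]]] := uplinkP uU.
  have := arcu_succ_uniq tb anc_tb u_tb (card_Fu uU) Fu_cov Fu_min arc_u arc_u'.
  by move/eqP; rewrite (negbTE qq').
have q'_u : apex q' \notin Pth u.
  by apply: contra uu' => q'_u; apply/eqP; apply: Pth_U_inj uU u'U q'_u q'_u'.
have [_ q'F] := arc_F arc_pq'.
have := depth_apex_le_source uU arc_u q'F q'y yq q_y q'_u.
by rewrite leqNgt sanc_depth // arc_sanc_apex.
Qed.

Lemma arc_comparable rho l1 l2 z : l1 \in F -> l2 \in F ->
  connect arc rho l1 -> connect arc rho l2 -> z \in Vl l1 -> z \in Vl l2 ->
  connect arc l1 l2 || connect arc l2 l1.
Proof.
have [n] := ubnP (depth (apex l1) + depth (apex l2)); elim: n l1 l2 z => // n IH l1 l2 z.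
wlog l12 : l1 l2 / anc (apex l1) (apex l2) => [W|] lt_n l1F l2F rho_l1 rho_l2 z1 z2.
  have [l12|/sanc_anc l21] :=
    anc_cases (anc_apex_Vl (card_F l1F) z1) (anc_apex_Vl (card_F l2F) z2).
    exact: W.
  by rewrite orbC; apply: W l21 _ _ _ _ _ z2 z1; rewrite // addnC.
have [rho_eq|rho_l2'] := eqVneq rho l2; first by rewrite -rho_eq rho_l1 orbT.
have [p rho_p arc_p2] := connect_last_arc rho_l2 rho_l2'.
have [pF _] := arc_F arc_p2; have [u uU [_ _ l2_p]] := arc_apex arc_p2.
have l2_l1 := Vl_up_closed (card_F l1F) l12 (anc_apex_Vl (card_F l2F) z2) z1.
have lt_p : depth (apex l1) + depth (apex p) < n.
  rewrite -ltnS (leq_trans _ lt_n) // ltnS ltn_add2l.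
  exact: sanc_depth (arc_sanc_apex arc_p2).
case/orP: (IH _ _ _ lt_p l1F pF rho_l1 rho_p l2_l1 (Pth_sub_Vl l2_p)) => [l1_p|p_l1].
  by rewrite (connect_trans l1_p (connect1 arc_p2)).
have [<-|p_l1'] := eqVneq p l1; first by rewrite connect1.
have [q' arc_pq' q'_l1] := connect_first_arc p_l1 p_l1'.
have [l2_eq|l2q'] := eqVneq l2 q'; first by rewrite l2_eq q'_l1 orbT.
by have := sibling_subtree_avoids_apex arc_p2 arc_pq' l2q' q'_l1 l12; rewrite l2_l1.
Qed.

End DependencyGraph.
End Tree.

Unset Implicit Arguments.
Set Strict Implicit.

Theorem lemma12 (V : finType) (par : V -> V) (r : V)
    (L F U : {set {set V}}) (Fu : {set V} -> {set {set V}})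
    (C : {set {set V}}) (l0 l1 l2 : {set V}) :
  (* G is a spanning tree rooted at r, given by its parent function *)
  par r = r ->
  (forall v : V, iter #|V| par v = r) ->
  (* links are 2-element subsets of V *)
  (forall l, l \in L -> #|l| = 2) ->
  (* F is a WTAP solution *)
  F \subset L ->
  (forall e : V, e != r -> exists2 l, l \in F & e \in Pth par r l) ->
  (* U is a set of up-links with pairwise disjoint paths *)
  U \subset L ->
  (forall u, u \in U -> exists t b, u = [set t; b] /\ anc par t b) ->
  (forall u1 u2, u1 \in U -> u2 \in U -> u1 != u2 ->
     [disjoint Pth par r u1 & Pth par r u2]) ->
  (* Fu u is a valid (fixed) choice of F_u for each u in U *)
  (forall u t b, u \in U -> u = [set t; b] -> anc par t b ->
     Fu_spec par r F u t (Fu u)) ->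
  (* C is a weakly connected component of the dependency graph of U *)
  l0 \in F ->
  C = [set l in F | connect (dep_sym par r U Fu) l0 l] ->
  l1 \in C -> l2 \in C ->
  Vl par r l1 :&: Vl par r l2 != set0 ->
  connect (dep_arc par r U Fu) l1 l2 || connect (dep_arc par r U Fu) l2 l1.
Proof.
move=> par_r iter_par card_L F_L _ U_L U_up U_disj Fu_ok _ -> l1C l2C.
have card_F l : l \in F -> #|l| = 2 by move/(subsetP F_L)/card_L.
have U_spec u : u \in U -> exists t b,
    [/\ u = [set t; b], t != b, anc par t b & Fu_spec par r F u t (Fu u)].
  move=> uU; have [t [b [u_tb tb]]] := U_up u uU.
  exists t, b; split=> //; last exact: (Fu_ok u t b uU u_tb tb).
  by have := card_L u (subsetP U_L u uU); rewrite u_tb cards2; case: (t != b).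
have [rho rho_l0 rho_root] := arc_root_exists par_r iter_par card_F U_spec l0.
move: l1C l2C; rewrite !inE => /andP[l1F l0_l1] /andP[l2F l0_l2].
have reach := connect_root_sym par_r iter_par card_F U_spec U_disj rho_root rho_l0.
case/set0Pn=> z /setIP[z1 z2].
exact: (arc_comparable par_r iter_par card_F U_spec U_disj l1F l2F
          (reach _ l0_l1) (reach _ l0_l2) z1 z2).
Qed.
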